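(* There is a constant $c_0>0$ such that for every $N$ for which some pair $(N,M)$ is non-feasible for the family of line graphs of star-forests, the smallest such $M$ satisfies \[M \geq \binom{N-\lceil (-15+\sqrt{153+72N})/2\rceil}{2} > \frac{N^2}{2} - c_0N\sqrt{N}.\]
   Context: All graphs are finite and simple; $L(F)$ is the line graph of $F$. A star-forest is a forest each of whose components is a star $K_{1,n_j}$ ($n_j\ge1$). For integers $N\ge1$ and $0\le M\le\binom N2$, $(N,M)$ is feasible for the family of line graphs of star-forests if there is a star-forest $F$ with $N$ edges such that $L(F)$ has exactly $M$ edges; otherwise it is non-feasible. *)

From mathcomp Require Import all_boot.
From Stdlib Require Import Reals.

Set Implicit Arguments.
Unset Strict Implicit.
Unset Printing Implicit Defensive.

(* A star-forest: every
   component is a star K_{1,n} with n >= 1, i.e. it has at least 2 vertices and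
   a centre c such that two vertices of the component are adjacent iff exactly
   one of them is c. *)
Definition is_star_forest (T : finType) (e : rel T) : Prop :=
  symmetric e /\ irreflexive e /\
  forall x : T, exists c : T,
    connect e x c /\ (1 < #|[set y | connect e x y]|)%N /\
    forall y z, connect e x y -> connect e x z ->
      (e y z <-> ((y == c) != (z == c))).

Definition edges (T : finType) (e : rel T) : {set {set T}} :=
  [set S | [exists x, exists y, e x y && (S == [set x; y])]].

Definition line_edges (T : finType) (e : rel T) : {set {set {set T}}} :=
  [set P | [exists S1 in edges e, exists S2 in edges e,
     [&& S1 != S2, S1 :&: S2 != set0 & P == [set S1; S2]]]].

Definition feasible (N M : nat) : Prop :=
  exists (T : finType) (e : rel T),
    is_star_forest e /\ #|edges e| = N /\ #|line_edges e| = M.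

(* Ceiling of a real number: ceil x = - floor (- x), floor y = up y - 1. *)
Definition ceilZ (x : R) : Z := (- (up (- x) - 1))%Z.

From mathcomp Require Import all_boot zify.
From Stdlib Require Import Reals Lra Psatz.
From Stdlib Require Znat.

Set Implicit Arguments.
Unset Strict Implicit.
Unset Printing Implicit Defensive.

(* A disjoint union of star-forests is a star-forest, so feasible pairs are
   closed under addition, and the star K_{1,n} realises (n, C(n,2)); in
   particular K_{1,1} realises (1, 0).  Choosing a and then b greedily,
   M = C(a,2) + C(b,2) + c with c < b and M - C(a,2) < a, so stars of sizes a
   and b, c copies of K_{1,2} and single edges realise (N, M) as soon as
   a + b + 2c <= N.  If M < C(N-k,2) then a < N-k, hence
   9b(b-1) <= 18(a-1) <= 18(N-k-2) <= (k-6)(k+3) whenever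
   18N <= k^2 + 15k + 18; this forces 3b <= k+3 and so a + b + 2c <= N.
   The k of the statement is the least integer with 18N <= k^2 + 15k + 18,
   and k <= 15/2 sqrt N yields the asymptotic bound. *)

Definition star_component (T : finType) (e : rel T) (x c : T) : Prop :=
  connect e x c /\ (1 < #|[set y | connect e x y]|)%N /\
  forall y z, connect e x y -> connect e x z -> (e y z <-> ((y == c) != (z == c))).

Lemma star_forestP (T : finType) (e : rel T) :
  is_star_forest e <-> [/\ symmetric e, irreflexive e & forall x, exists c, star_component e x c].
Proof. by split=> [[? [? ?]] | [? ? ?]]. Qed.

Section EdgeSets.
Variables (T : finType) (e : rel T).

Lemma edgesP S :
  reflect (exists x, exists2 y, e x y & S = [set x; y]) (S \in edges e).
Proof.
rewrite inE; apply: (iffP existsP) => [[x /existsP[y /andP[exy /eqP->]]]|[x [y exy ->]]].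
  by exists x, y.
by exists x; apply/existsP; exists y; rewrite exy eqxx.
Qed.

Lemma edge_neq0 S : S \in edges e -> S != set0.
Proof. by case/edgesP => x [y _ ->]; apply/set0Pn; exists x; rewrite !inE eqxx. Qed.

Lemma line_edgesP P :
  reflect (exists S1, exists S2, [/\ S1 \in edges e, S2 \in edges e, S1 != S2,
                                     S1 :&: S2 != set0 & P = [set S1; S2]])
          (P \in line_edges e).
Proof.
rewrite inE; apply: (iffP existsP) => [[S1 /andP[S1e /existsP[S2]]]|[S1 [S2 [S1e S2e ne me ->]]]].
  by case/andP=> S2e /and3P[ne me /eqP->]; exists S1, S2.
by exists S1; rewrite S1e; apply/existsP; exists S2; rewrite S2e ne me eqxx.
Qed.

Lemma line_edge_has_edge P : P \in line_edges e -> exists2 S, S \in P & S \in edges e.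
Proof. by case/line_edgesP => S1 [S2 [S1e _ _ _ ->]]; exists S1 => //; rewrite !inE eqxx. Qed.

End EdgeSets.

Section ClosedEmbedding.
Variables (A T : finType) (eA : rel A) (eT : rel T) (h : A -> T).
Hypothesis h_inj : injective h.
Hypothesis h_edge : forall a b, eT (h a) (h b) = eA a b.
Hypothesis h_closed : forall a y, eT (h a) y -> exists b, y = h b.

Lemma connect_embed a b : connect eA a b -> connect eT (h a) (h b).
Proof.
move=> /connectP[p pth ->]; apply/connectP; exists (map h p); last by rewrite last_map.
by rewrite path_map; apply: sub_path pth => x y; rewrite /= h_edge.
Qed.

Lemma connect_from_embed a y : connect eT (h a) y -> exists2 b, y = h b & connect eA a b.
Proof.
move/connectP=> [p]; elim: p a => [|z p IHp] a /=; first by move=> _ ->; exists a.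
case/andP=> eaz pth yl; have [b zb] := h_closed eaz; subst z; have [c -> bc] := IHp b pth yl.
by exists c => //; apply: connect_trans bc; apply: connect1; rewrite -h_edge.
Qed.

Lemma component_embed a : [set y | connect eT (h a) y] = h @: [set b | connect eA a b].
Proof.
apply/setP => y; rewrite inE; apply/idP/imsetP => [/connect_from_embed[b -> ab]|[b]].
  by exists b; rewrite ?inE.
by rewrite inE => /connect_embed /[swap] ->.
Qed.

Lemma edges_embed S : S \in edges eA -> h @: S \in edges eT.
Proof.
case/edgesP => x [y exy ->]; apply/edgesP; exists (h x), (h y); first by rewrite h_edge.
by rewrite imsetU1 imset_set1.
Qed.

Lemma edge_from_embed a y : eT (h a) y -> exists2 S, S \in edges eA & [set h a; y] = h @: S.
Proof.
move=> /[dup] ey /h_closed[b eyb]; subst y; exists [set a; b].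
  by apply/edgesP; exists a, b; rewrite -?h_edge.
by rewrite imsetU1 imset_set1.
Qed.

Lemma meet_embed (S1 S2 : {set A}) : (h @: S1 :&: h @: S2 != set0) = (S1 :&: S2 != set0).
Proof.
by rewrite -imsetI; [rewrite -!cards_eq0 card_imset | move=> x y _ _ /h_inj].
Qed.

Lemma line_edges_embed P :
  P \in line_edges eA -> [set h @: S | S : {set A} in P] \in line_edges eT.
Proof.
case/line_edgesP => S1 [S2 [S1e S2e ne me ->]]; apply/line_edgesP.
exists (h @: S1), (h @: S2); rewrite !edges_embed // meet_embed me imsetU1 imset_set1.
by rewrite (inj_eq (imset_inj h_inj)) ne.
Qed.

Lemma star_component_embed a c : star_component eA a c -> star_component eT (h a) (h c).
Proof.
case=> ac [comp_gt1 starP]; split; first exact: connect_embed.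
rewrite component_embed card_imset //; split=> // y' z'.
move=> /connect_from_embed[y -> ay] /connect_from_embed[z -> az].
by rewrite h_edge !(inj_eq h_inj); apply: starP.
Qed.

Lemma line_edges_embed_pair S1 S2 :
    S1 \in edges eA -> S2 \in edges eA ->
    h @: S1 != h @: S2 -> h @: S1 :&: h @: S2 != set0 ->
  [set h @: S1; h @: S2]
    \in [set [set h @: S | S : {set A} in P] | P : {set {set A}} in line_edges eA].
Proof.
rewrite (inj_eq (imset_inj h_inj)) meet_embed => S1e S2e ne me.
have -> : [set h @: S1; h @: S2] = [set h @: S | S : {set A} in [set S1; S2]].
  by rewrite imsetU1 imset_set1.
by apply: imset_f; apply/line_edgesP; exists S1, S2.
Qed.

End ClosedEmbedding.

Section DisjointUnion.
Variables (T1 T2 : finType) (e1 : rel T1) (e2 : rel T2).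

Definition sum_rel : rel (T1 + T2) := fun x y =>
  match x, y with
  | inl a, inl b => e1 a b
  | inr a, inr b => e2 a b
  | _, _ => false
  end.

Let edge_inl a b : sum_rel (inl a) (inl b) = e1 a b. Proof. by []. Qed.
Let edge_inr a b : sum_rel (inr a) (inr b) = e2 a b. Proof. by []. Qed.
Let closed_inl a y : sum_rel (inl a) y -> exists b, y = inl b.
Proof. by case: y => // b; exists b. Qed.
Let closed_inr a y : sum_rel (inr a) y -> exists b, y = inr b.
Proof. by case: y => // b; exists b. Qed.

Lemma imset_inl_neq_inr (S1 : {set T1}) (S2 : {set T2}) :
  S1 != set0 -> inl @: S1 != inr @: S2.
Proof.
case/set0Pn => a aS1; apply/negP => /eqP/setP/(_ (inl a)).
by rewrite imset_f // => /esym/imsetP[].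
Qed.

Lemma edges_sum : edges sum_rel =
  [set inl @: S | S : {set T1} in edges e1] :|: [set inr @: S | S : {set T2} in edges e2].
Proof.
apply/setP => S; apply/idP/setUP => [/edgesP[[a|a] [y exy ->]]|].
- by have [S' S'e ->] := edge_from_embed edge_inl closed_inl exy; left; apply: imset_f.
- by have [S' S'e ->] := edge_from_embed edge_inr closed_inr exy; right; apply: imset_f.
by case=> /imsetP[S' S'e ->]; [apply: (edges_embed edge_inl) | apply: (edges_embed edge_inr)].
Qed.

Lemma card_edges_sum : #|edges sum_rel| = #|edges e1| + #|edges e2|.
Proof.
rewrite edges_sum -(card_imset _ (imset_inj (@inl_inj T1 T2))).
rewrite -(card_imset _ (imset_inj (@inr_inj T1 T2))); apply/eqP; rewrite (leq_card_setU _ _).2.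
rewrite -setI_eq0 -subset0; apply/subsetP => _ /setIP[/imsetP[S1 S1e ->] /imsetP[S2 _ /eqP]].
by rewrite (negbTE (imset_inl_neq_inr _ (edge_neq0 S1e))).
Qed.

Lemma disjoint_imset_inl_inr (S1 : {set T1}) (S2 : {set T2}) : inl @: S1 :&: inr @: S2 = set0.
Proof. by apply/setP => x; rewrite !inE; apply/andP => -[/imsetP[a _ ->] /imsetP[]]. Qed.

Lemma line_edges_sum : line_edges sum_rel =
     [set [set inl @: S | S : {set T1} in P] | P : {set {set T1}} in line_edges e1]
  :|: [set [set inr @: S | S : {set T2} in P] | P : {set {set T2}} in line_edges e2].
Proof.
apply/setP => P; apply/idP/setUP => [/line_edgesP[S1 [S2 [S1e S2e ne me ->]]]|].
  move: S1e S2e ne me; rewrite edges_sum.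
  case/setUP=> /imsetP[A Ae ->]; case/setUP=> /imsetP[B Be ->] ne me.
  - by left; apply: (line_edges_embed_pair inl_inj).
  - by rewrite disjoint_imset_inl_inr eqxx in me.
  - by rewrite setIC disjoint_imset_inl_inr eqxx in me.
  - by right; apply: (line_edges_embed_pair inr_inj).
by case=> /imsetP[P' P'e ->]; [apply: (line_edges_embed inl_inj edge_inl) |
                               apply: (line_edges_embed inr_inj edge_inr)].
Qed.

Lemma card_line_edges_sum : #|line_edges sum_rel| = #|line_edges e1| + #|line_edges e2|.
Proof.
rewrite line_edges_sum -(card_imset _ (imset_inj (imset_inj (@inl_inj T1 T2)))).
rewrite -(card_imset _ (imset_inj (imset_inj (@inr_inj T1 T2)))).
apply/eqP; rewrite (leq_card_setU _ _).2 -setI_eq0 -subset0; apply/subsetP.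
move=> _ /setIP[/imsetP[P1 P1e ->] /imsetP[P2 _ eqP12]].
have [S SP1 Se] := line_edge_has_edge P1e.
have /imsetP[S' _ /eqP] : inl @: S \in [set inr @: S | S : {set T2} in P2].
  by rewrite -eqP12; apply: imset_f.
by rewrite (negbTE (imset_inl_neq_inr _ (edge_neq0 Se))).
Qed.

Lemma star_forest_sum : is_star_forest e1 -> is_star_forest e2 -> is_star_forest sum_rel.
Proof.
case/star_forestP=> sym1 irr1 star1 /star_forestP[sym2 irr2 star2]; apply/star_forestP; split.
- by case=> a [] b /=; rewrite 1?sym1 1?sym2.
- by case=> a /=; [apply: irr1 | apply: irr2].
case=> a; [have [c /(star_component_embed inl_inj edge_inl closed_inl)] := star1 a |
            have [c /(star_component_embed inr_inj edge_inr closed_inr)] := star2 a].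
  by exists (inl c).
by exists (inr c).
Qed.

End DisjointUnion.

Section Star.
Variable n : nat.

Definition star_rel : rel 'I_n.+1 := fun x y => (x == ord0) != (y == ord0).

Lemma star_edges : edges star_rel = [set [set ord0; i] | i in [set~ ord0]].
Proof.
apply/setP => S; apply/edgesP/imsetP => [[x [y]]|[i]]; last first.
  by rewrite !inE => i0 ->; exists ord0, i; rewrite // /star_rel eqxx (negbTE i0).
rewrite /star_rel; case: (x =P ord0) => [->|/eqP x0]; case: (y =P ord0) => [->|/eqP y0] //= _ ->.
  by exists y; rewrite ?inE.
by exists x; rewrite ?inE // setUC.
Qed.

Lemma card_star_edges : #|edges star_rel| = n.
Proof.
rewrite star_edges card_in_imset ?cardsC1 ?card_ord // => i j.
rewrite !inE => i0 _ /setP/(_ i); rewrite !inE eqxx orbT (negbTE i0) /=.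
by move=> /esym/eqP.
Qed.

Lemma star_line_edges :
  line_edges star_rel = [set P : {set {set _}} | P \subset edges star_rel & #|P| == 2].
Proof.
apply/setP => P; rewrite [in RHS]inE; apply/line_edgesP/andP => [[S1 [S2 [S1e S2e ne _ ->]]]|].
  by rewrite cards2 ne; split=> //; apply/subsetP => S /set2P[]->.
case=> /subsetP sub /cards2P[S1 [S2 [ne P12]]]; exists S1, S2.
have centre S : S \in P -> ord0 \in S.
  by move/sub; rewrite star_edges => /imsetP[i _ ->]; rewrite !inE eqxx.
rewrite !sub ?P12 ?inE ?eqxx ?orbT //; split=> //.
by apply/set0Pn; exists ord0; rewrite inE !centre // P12 !inE eqxx ?orbT.
Qed.

Lemma card_star_line_edges : #|line_edges star_rel| = 'C(n, 2).
Proof. by rewrite star_line_edges cards_draws card_star_edges. Qed.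

Lemma star_forest_star : 0 < n -> is_star_forest star_rel.
Proof.
move=> n_gt0; have sym : symmetric star_rel by move=> u v; rewrite /star_rel eq_sym.
have to_centre y : connect star_rel y ord0.
  case: (y =P ord0) => [->|/eqP y0]; first exact: connect0.
  by apply: connect1; rewrite /star_rel (negbTE y0) eqxx.
apply/star_forestP; split=> // [x|x]; first by rewrite /star_rel eqxx.
exists ord0; split; first exact: to_centre.
split=> [|y z _ _]; last by [].
have -> : [set y | connect star_rel x y] = [set: 'I_n.+1].
  apply/setP => y; rewrite !inE; apply: connect_trans (to_centre x) _.
  by rewrite sym_connect_sym.
by rewrite cardsT card_ord.
Qed.

End Star.

Lemma feasible_add N1 M1 N2 M2 :
  feasible N1 M1 -> feasible N2 M2 -> feasible (N1 + N2) (M1 + M2).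
Proof.
move=> [T1 [e1 [sf1 [E1 L1]]]] [T2 [e2 [sf2 [E2 L2]]]].
exists (T1 + T2)%type, (sum_rel e1 e2); split; first exact: star_forest_sum.
by rewrite card_edges_sum card_line_edges_sum E1 E2 L1 L2.
Qed.

Lemma feasible0 : feasible 0 0.
Proof.
exists void, (fun _ _ => false); split; first by apply/star_forestP; split=> // -[].
split; apply: eq_card0 => S.
  by apply/edgesP => -[[]].
by apply/line_edgesP => -[S1 [S2 [/edgesP[[]]]]].
Qed.

Lemma feasible_star n : 0 < n -> feasible n 'C(n, 2).
Proof.
move=> n_gt0; exists 'I_n.+1, (@star_rel n); split; first exact: star_forest_star.
by rewrite card_star_edges card_star_line_edges.
Qed.

Lemma feasible_stars s : 0 \notin s -> feasible (sumn s) (sumn [seq 'C(n, 2) | n <- s]).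
Proof.
elim: s => [_|n s IHs]; first exact: feasible0.
by rewrite inE negb_or eq_sym -lt0n => /andP[/feasible_star star_n /IHs]; apply: feasible_add.
Qed.

Lemma feasible_stars_pad N s : 0 \notin s -> sumn s <= N ->
  feasible N (sumn [seq 'C(n, 2) | n <- s]).
Proof.
move=> s_gt0 sN; have := @feasible_stars (s ++ nseq (N - sumn s) 1).
rewrite mem_cat negb_or s_gt0 mem_nseq andbF => /(_ isT).
by rewrite map_cat map_nseq !sumn_cat !sumn_nseq mul0n addn0 mul1n subnKC.
Qed.

Lemma bin2_double n : 2 * 'C(n, 2) = n * (n - 1).
Proof. by elim: n => // n IHn; rewrite binS bin1 mulnDr IHn; nia. Qed.

Lemma bin2S n : 'C(n.+1, 2) = 'C(n, 2) + n.
Proof. by rewrite binS bin1. Qed.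

Lemma bin2_bracket r : exists2 b, 0 < b & 'C(b, 2) <= r < 'C(b.+1, 2).
Proof.
elim: r => [|r [b b_gt0 /andP[br rb]]]; first by exists 1.
have [rb'|] := ltnP r.+1 'C(b.+1, 2); first by exists b; rewrite // rb' andbT leqW.
move=> rb'; exists b.+1 => //; rewrite !bin2S in rb rb' *; apply/andP; split; lia.
Qed.

Lemma feasible_lt_bin2_sub N k M :
  18 * N <= k * k + 15 * k + 18 -> M < 'C(N - k, 2) -> feasible N M.
Proof.
move=> Nk MN.
have [a a_gt0 /andP[aM Ma]] := bin2_bracket M.
have [b b_gt0 /andP[br rb]] := bin2_bracket (M - 'C(a, 2)).
rewrite bin2S in Ma; rewrite bin2S in rb.
have a_lt : a < N - k by rewrite ltnNge; apply/negP => /(@leq_bin2l _ _ 2); lia.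
have b_le : 3 * b <= k + 3.
  have := bin2_double b; nia.
set c := M - 'C(a, 2) - 'C(b, 2).
have -> : M = sumn [seq 'C(n, 2) | n <- [:: a, b & nseq c 2]].
  by rewrite /= map_nseq sumn_nseq binn; lia.
apply: feasible_stars_pad.
  by rewrite !inE mem_nseq andbF orbF negb_or !(eq_sym 0) -!lt0n a_gt0 b_gt0.
by rewrite /= sumn_nseq /c; lia.
Qed.

Lemma INR_bin2 n : (2 * INR 'C(n, 2) = INR n * (INR n - 1))%R.
Proof.
case: n => [|n]; first by rewrite /=; lra.
rewrite -[2%R]/(INR 2) -mult_INR multE bin2_double -multE mult_INR -minusE minus_INR.
  by rewrite /=; lra.
by apply/leP.
Qed.

Lemma ceilZ_bounds x : (0 <= x)%R -> (x <= INR (Z.to_nat (ceilZ x)) < x + 1)%R.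
Proof.
move=> x_ge0; have [up_gt up_le] := archimed (- x).
have ceilE : IZR (ceilZ x) = (1 - IZR (up (- x)))%R.
  by rewrite /ceilZ opp_IZR minus_IZR; lra.
have ceil_ge0 : (0 <= ceilZ x)%Z.
  by apply: le_IZR; lra.
rewrite INR_IZR_INZ Znat.Z2Nat.id //; lra.
Qed.

Definition defect (N : nat) : nat := Z.to_nat (ceilZ ((-15 + sqrt (153 + 72 * INR N)) / 2)).

Lemma defect_bounds N : (1 <= N)%N ->
  (18 * INR N <= INR (defect N) ^ 2 + 15 * INR (defect N) + 18 /\
   INR (defect N) <= 15 / 2 * sqrt (INR N) - 6)%R.
Proof.
move=> N_ge1; have N1 : (1 <= INR N)%R by apply: (le_INR 1); apply/leP.
set q := sqrt (153 + 72 * INR N); set s := sqrt (INR N).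
have qq : (q * q = 153 + 72 * INR N)%R by apply: sqrt_sqrt; lra.
have ss : (s * s = INR N)%R by apply: sqrt_sqrt; lra.
have q_ge15 : (15 <= q)%R by rewrite -(sqrt_square 15); [apply: sqrt_le_1_alt|]; lra.
have q_le : (q <= 15 * s)%R.
  have s_ge0 : (0 <= s)%R by apply: sqrt_pos.
  by rewrite -(sqrt_square (15 * s)); [apply: sqrt_le_1_alt|]; nra.
have [k_ge k_lt] : ((-15 + q) / 2 <= INR (defect N) < (-15 + q) / 2 + 1)%R.
  by apply: ceilZ_bounds; lra.
split; nra.
Qed.

Lemma defect_quadratic N : (1 <= N)%N -> (18 * N <= defect N * defect N + 15 * defect N + 18)%N.
Proof.
move=> /defect_bounds[bound _].
suff : (INR (18 * N) <= INR (defect N * defect N + 15 * defect N + 18))%R by move/INR_le/leP.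
rewrite -!multE -!plusE !(plus_INR, mult_INR) /=; lra.
Qed.

Lemma bin2_sub_gt N k : (1 <= N)%N -> (INR k <= 15 / 2 * sqrt (INR N) - 6)%R ->
  (INR 'C(N - k, 2) > INR N ^ 2 / 2 - 20 * INR N * sqrt (INR N))%R.
Proof.
move=> N_ge1 k_le; have N1 : (1 <= INR N)%R by apply: (le_INR 1); apply/leP.
set s := sqrt (INR N) in k_le *.
have ss : (s * s = INR N)%R by apply: sqrt_sqrt; lra.
have s_ge1 : (1 <= s)%R by rewrite /s -sqrt_1; apply: sqrt_le_1_alt.
have m_ge : (INR N - INR k <= INR (N - k))%R.
  have := pos_INR (N - k); case: (leqP k N) => [kN|/ltP/lt_INR]; last lra.
  by rewrite -minusE minus_INR; [lra | apply/leP].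
have := INR_bin2 (N - k); have := pos_INR 'C(N - k, 2).
case: (Rle_lt_dec (INR N) (15 / 2 * s)) => [small|large] bin2_ge0 bin2E.
  suff : (INR N ^ 2 / 2 - 20 * INR N * s < 0)%R by lra.
  nra.
have m_large : (INR N - 15 / 2 * s + 6 <= INR (N - k))%R by lra.
nra.
Qed.

Theorem mainTheorem8 :
  exists c0 : R, (0 < c0)%R /\
  forall N M0 : nat,
    (1 <= N)%N -> (M0 <= 'C(N, 2))%N -> ~ feasible N M0 ->
    (forall M : nat, (M < M0)%N -> feasible N M) ->
    let k := Z.to_nat (ceilZ ((-15 + sqrt (153 + 72 * INR N)) / 2)) in
    ('C(N - k, 2) <= M0)%N /\
    (INR 'C(N - k, 2) > INR N ^ 2 / 2 - c0 * INR N * sqrt (INR N))%R.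
Proof.
exists 20%R; split; first lra.
move=> N M0 N_ge1 _ M0_infeasible _ k; split.
  rewrite leqNgt; apply/negP => /(feasible_lt_bin2_sub (defect_quadratic N_ge1)).
  exact: M0_infeasible.
by apply: bin2_sub_gt => //; case: (defect_bounds N_ge1).
Qed.
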